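(* Let $m\ge1$, $L\in\{L',\mathcal{R}^*\}$ and $C(m)=\{(Tr(ax))_{x\in L}:a\in\mathcal{R}\}\subseteq R^{|L|}$. Then the dual Lee distance of $C(m)$, i.e. the minimum Lee weight of a nonzero codeword of $C(m)^\perp=\{y\in R^{|L|}:\sum_{x\in L}c_xy_x=0\ \forall c\in C(m)\}$, equals $2$.
   Context: Let $R=\mathbb{F}_3[u]/(u^3-1)$ and $\mathcal{R}=\mathbb{F}_{3^m}[u]/(u^3-1)=\mathbb{F}_{3^m}+u\mathbb{F}_{3^m}+u^2\mathbb{F}_{3^m}$. Every element of $\mathcal{R}$ is uniquely $x_1+x_2(u-1)+x_3(u-1)^2$ with $x_i\in\mathbb{F}_{3^m}$; $\mathcal{R}^*$ (the units) consists of those with $x_1\neq0$. $Tr:\mathcal{R}\to R$ is $Tr(a+ub+u^2c)=tr(a)+u\,tr(b)+u^2tr(c)$, with $tr$ the absolute trace $\mathbb{F}_{3^m}\to\mathbb{F}_3$. $\mathcal{Q}$ denotes the nonzero squares of $\mathbb{F}_{3^m}$ and $L'=\{x_1+x_2(u-1)+x_3(u-1)^2:x_1\in\mathcal{Q},x_2,x_3\in\mathbb{F}_{3^m}\}$. Coordinates of $R^{|L|}$ are indexed by $L$. The Gray map $\phi:R\to\mathbb{F}_3^3$ is $\phi(a'+ub'+u^2c')=(a',b',c')$, extended coordinatewise; the Lee weight of $v\in R^n$ is the Hamming weight of $\phi(v)$. *)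

From HB Require Import structures.
From mathcomp Require Import all_boot all_order all_algebra all_field.
Set Implicit Arguments. Unset Strict Implicit. Unset Printing Implicit Defensive.
Import GRing.Theory.
Local Open Scope ring_scope.

(* Elements of K[u]/(u^3-1) are represented by their coefficient triples
   ((a, b), c) w.r.t. the basis 1, u, u^2, i.e. a + u b + u^2 c. *)
Definition tri (K : Type) := (K * K * K)%type.

Definition cadd (K : nzRingType) (x y : tri K) : tri K :=
  let: (a0, a1, a2) := x in let: (b0, b1, b2) := y in (a0 + b0, a1 + b1, a2 + b2).

(* multiplication modulo u^3 = 1 *)
Definition cmul (K : nzRingType) (x y : tri K) : tri K :=
  let: (a0, a1, a2) := x in let: (b0, b1, b2) := y in
  (a0 * b0 + a1 * b2 + a2 * b1,
   a0 * b1 + a1 * b0 + a2 * b2,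
   a0 * b2 + a1 * b1 + a2 * b0).

Definition R3 := tri 'F_3.
(* script R = F_{3^m}[u]/(u^3-1), for F a field with 3^m elements *)
Definition RR (F : finFieldType) := tri F.

(* The element x1 + x2 (u-1) + x3 (u-1)^2 of F[u]/(u^3-1), in the u-basis. *)
Definition ofU1 (F : finFieldType) (x1 x2 x3 : F) : RR F :=
  cadd (cadd (x1, 0, 0) (cmul (x2, 0, 0) (-1, 1, 0)))
       (cmul (x3, 0, 0) (cmul (-1, 1, 0) (-1, 1, 0))).

Definition Qsq (F : finFieldType) : {set F} :=
  [set x | (x != 0) && [exists y : F, y ^+ 2 == x]].

Definition Lprime (F : finFieldType) : {set RR F} :=
  [set ofU1 x.1.1 x.1.2 x.2 | x in [set x : F * F * F | x.1.1 \in Qsq F]].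

(* the units of script R: x1 <> 0 *)
Definition Runits (F : finFieldType) : {set RR F} :=
  [set ofU1 x.1.1 x.1.2 x.2 | x in [set x : F * F * F | x.1.1 != 0]].

(* absolute trace F_{3^m} -> F_3: the value sum_{i<m} x^(3^i) lies in the
   prime field {0, 1, 2 = -1}; we read it off as an element of 'F_3. *)
Definition trF (F : finFieldType) (m : nat) (x : F) : F :=
  \sum_(i < m) x ^+ (3 ^ i).

Definition trF3 (F : finFieldType) (m : nat) (x : F) : 'F_3 :=
  let t := trF m x in
  if t == 1 then 1 else if t == 1 + 1 then 1 + 1 else 0.

Definition Tr (F : finFieldType) (m : nat) (x : RR F) : R3 :=
  let: (a, b, c) := x in (trF3 m a, trF3 m b, trF3 m c).

Definition Lidx (F : finFieldType) (L : {set RR F}) := {x : RR F | x \in L}.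

Definition word (F : finFieldType) (L : {set RR F}) := {ffun Lidx L -> R3}.

Definition cw (F : finFieldType) (m : nat) (L : {set RR F}) (a : RR F) : word L :=
  [ffun x => Tr m (cmul a (val x))].

Definition codeC (F : finFieldType) (m : nat) (L : {set RR F}) : {set word L} :=
  [set cw m L a | a : RR F].

Definition dotR (F : finFieldType) (L : {set RR F}) (c y : word L) : R3 :=
  (\sum_x (cmul (c x) (y x)).1.1,
   \sum_x (cmul (c x) (y x)).1.2,
   \sum_x (cmul (c x) (y x)).2).

Definition dualC (F : finFieldType) (m : nat) (L : {set RR F}) : {set word L} :=
  [set y : word L | [forall c in codeC m L, dotR c y == (0, 0, 0)]].

(* Gray map phi(a' + u b' + u^2 c') = (a', b', c') and Lee weight =
   Hamming weight of the Gray image *)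
Definition gray (r : R3) : seq 'F_3 := let: (a, b, c) := r in [:: a; b; c].

Definition leeWt (F : finFieldType) (L : {set RR F}) (y : word L) : nat :=
  (\sum_x count (fun e : 'F_3 => e != 0%R) (gray (y x)))%N.

Definition zeroword (F : finFieldType) (L : {set RR F}) : word L :=
  [ffun => ((0 : 'F_3), (0 : 'F_3), (0 : 'F_3))].

From HB Require Import structures.
From mathcomp Require Import all_boot all_order all_algebra all_field.
From mathcomp Require Import ring zify.
Set Implicit Arguments. Unset Strict Implicit. Unset Printing Implicit Defensive.
Import GRing.Theory.
Local Open Scope ring_scope.

(* A dual word of Lee weight below 2 is nonzero at a single coordinate x0.
   Every x = p + q u + r u^2 in L has nonzero augmentation p + q + r (its value
   at u = 1), and in characteristic 3 its norm p^3 + q^3 + r^3 - 3pqr is the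
   cube of the augmentation; so x is a unit and a x = t is solvable for every
   scalar t.  Take t of nonzero trace (the trace polynomial has degree
   3^(m-1) < #|F|, so it does not vanish on all of F): the codeword
   (Tr(a x))_x pairs with y to tr(t) y_x0, forcing y_x0 = 0.  Conversely, Tr
   commutes with multiplication by u, so the word equal to u at the coordinate
   1, to -1 at the coordinate u and to 0 elsewhere is a dual word of Lee
   weight 2. *)

Lemma sum_supported1 (I : finType) (V : nmodType) (i : I) (f : I -> V) :
  (forall x, x != i -> f x = 0) -> \sum_x f x = f i.
Proof. by move=> f0; rewrite (bigD1 i) //= big1 ?addr0 // => x /f0. Qed.

Lemma sum_supported2 (I : finType) (V : nmodType) (i j : I) (f : I -> V) :
  i != j -> (forall x, x != i -> x != j -> f x = 0) -> \sum_x f x = f i + f j.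
Proof.
move=> neq_ij f0; rewrite (bigD1 i) //= (bigD1 j) 1?eq_sym //= big1 ?addr0 //.
by move=> x /andP[]; exact: f0.
Qed.

Section TriRing.
Variable K : comNzRingType.

Definition aug (x : tri K) : K := x.1.1 + x.1.2 + x.2.

Lemma cmulr0 (x : tri K) : cmul x 0 = 0.
Proof. by case: x => [[a b] c]; rewrite /cmul /= !mulr0 !addr0. Qed.

Lemma cmulr1 (x : tri K) : cmul x (1, 0, 0) = x.
Proof. by case: x => [[a b] c]; rewrite /cmul /= !(mulr0, mulr1, addr0, add0r). Qed.

Lemma cmulrN1 (x : tri K) : cmul x (-1, 0, 0) = - x.
Proof. by case: x => [[a b] c]; rewrite /cmul /= !(mulr0, mulrN1, addr0, add0r). Qed.

Definition cadj (x : tri K) : tri K :=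
  let: (p, q, r) := x in (p ^+ 2 - q * r, r ^+ 2 - p * q, q ^+ 2 - p * r).

Definition cnorm (x : tri K) : K :=
  let: (p, q, r) := x in p ^+ 3 + q ^+ 3 + r ^+ 3 - 3%:R * p * q * r.

Lemma cmul_cadj (x : tri K) : cmul (cadj x) x = (cnorm x, 0, 0).
Proof. by case: x => [[p q] r]; rewrite /cmul /=; congr (_, _, _); ring. Qed.

Lemma cmul_scalarA (s : K) (x y : tri K) :
  cmul (cmul (s, 0, 0) x) y = cmul (s, 0, 0) (cmul x y).
Proof.
by case: x y => [[a b] c] [[d e] f]; rewrite /cmul /=; congr (_, _, _); ring.
Qed.

Lemma cmul_scalar (s t : K) : cmul (s, 0, 0) (t, 0, 0) = (s * t, 0, 0).
Proof. by rewrite /cmul !(mulr0, mul0r, addr0). Qed.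

End TriRing.

Lemma cmul_scalar_eq0 (F : idomainType) (k : F) (x : tri F) :
  k != 0 -> cmul (k, 0, 0) x = 0 -> x = 0.
Proof.
case: x => [[a b] c] k0; rewrite /cmul /= !(mul0r, addr0) => /eqP.
by rewrite !xpair_eqE !mulf_eq0 (negbTE k0) /= => /andP[/andP[/eqP-> /eqP->] /eqP->].
Qed.

Section Char3.
Variable F : fieldType.
Hypothesis char3 : 3%N \in [pchar F].

Lemma three_eq0 : 3%:R = 0 :> F. Proof. exact: pcharf0 char3. Qed.

Lemma two_neq0 : 1 + 1 != 0 :> F.
Proof.
apply/eqP => two0; have := three_eq0.
have -> : 3%:R = 1 + 1 + 1 :> F by ring.
by rewrite two0 add0r => /eqP; rewrite oner_eq0.
Qed.

Lemma cube_fixed_char3 (z : F) : z ^+ 3 = z -> [\/ z = 0, z = 1 | z = 1 + 1].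
Proof.
move=> z3; have : z * (z - 1) * (z - (1 + 1)) = 0.
  have -> : z * (z - 1) * (z - (1 + 1)) = z ^+ 3 - z + 3%:R * (z - z ^+ 2) by ring.
  by rewrite z3 three_eq0 mul0r addr0 subrr.
move/eqP; rewrite !mulf_eq0 !subr_eq0 => /orP[/orP[]|] /eqP.
- exact: Or31.
- exact: Or32.
- exact: Or33.
Qed.

Lemma cnorm_char3 (x : tri F) : cnorm x = aug x ^+ 3.
Proof.
case: x => [[p q] r]; rewrite /cnorm /aug /=.
have -> : p ^+ 3 + q ^+ 3 + r ^+ 3 - 3%:R * p * q * r
   = (p + q + r) ^+ 3 - 3%:R * ((p + q) * (q + r) * (r + p) + p * q * r) by ring.
by rewrite three_eq0 mul0r subr0.
Qed.

Lemma exists_cmul_eq_scalar (x : tri F) (t : F) :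
  aug x != 0 -> exists a, cmul a x = (t, 0, 0).
Proof.
move=> aug_x; have nx : cnorm x != 0 by rewrite cnorm_char3 expf_neq0.
exists (cmul (t / cnorm x, 0, 0) (cadj x)).
by rewrite cmul_scalarA cmul_cadj cmul_scalar divfK.
Qed.

End Char3.

Definition trpoly (K : nzRingType) (n : nat) : {poly K} := \sum_(i < n) 'X^(3 ^ i).

Lemma size_trpoly (K : nzRingType) (n : nat) : size (trpoly K n.+1) = (3 ^ n).+1.
Proof.
elim: n => [|n IH]; first by rewrite /trpoly big_ord1 size_polyXn.
rewrite /trpoly big_ord_recr /= -/(trpoly K n.+1) addrC size_polyDl size_polyXn //.
by rewrite IH ltnS ltn_exp2l.
Qed.

Lemma horner_trpoly (F : finFieldType) (m : nat) (t : F) : (trpoly F m).[t] = trF m t.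
Proof. by rewrite /trpoly horner_sum; apply: eq_bigr => i _; rewrite hornerXn. Qed.

Section Trace.
Variables (F : finFieldType) (m : nat).
Hypothesis cardF : #|F| = (3 ^ m)%N.

Lemma pchar3 : 3%N \in [pchar F]. Proof. exact: card_finPcharP cardF _. Qed.

Lemma trF_cube (t : F) : trF m t ^+ 3 = trF m t.
Proof.
rewrite /trF -(pFrobenius_autE pchar3) rmorph_sum /=.
under eq_bigr => i _ do rewrite pFrobenius_autE -exprM -expnSr.
case: m cardF => [|n] cardF'; first by rewrite !big_ord0.
by rewrite big_ord_recr big_ord_recl /= -cardF' expf_card addrC.
Qed.

Lemma trF_prime (t : F) : [\/ trF m t = 0, trF m t = 1 | trF m t = 1 + 1].
Proof. exact (cube_fixed_char3 pchar3 (trF_cube t)). Qed.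

Lemma exists_trF_neq0 : (0 < m)%N -> exists t : F, trF m t != 0.
Proof.
case: m cardF => [//|n] cardF' _.
have p_neq0 : trpoly F n.+1 != 0 by rewrite -size_poly_eq0 size_trpoly.
apply/existsP; rewrite -negb_forall; apply/negP => /forallP tr0.
have := max_poly_roots p_neq0 (rs := enum F).
have all_roots : all (root (trpoly F n.+1)) (enum F).
  by apply/allP => t _; rewrite /root horner_trpoly tr0.
rewrite enum_uniq all_roots size_trpoly -cardE cardF' expnS => /(_ isT isT).
have : (0 < 3 ^ n)%N by rewrite expn_gt0.
lia.
Qed.

Lemma trF3_0 : trF3 m (0 : F) = 0.
Proof.
rewrite /trF3 (_ : trF m 0 = 0); last first.
  by rewrite /trF big1 // => i _; rewrite expr0n expn_eq0.
by rewrite eq_sym oner_eq0 eq_sym (negbTE (two_neq0 pchar3)).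
Qed.

Lemma trF3_eq0 (t : F) : trF3 m t = 0 -> trF m t = 0.
Proof. by rewrite /trF3; case: (trF_prime t) => ->; rewrite ?eqxx //; case: ifP. Qed.

Lemma exists_trF3_neq0 : (0 < m)%N -> exists t : F, trF3 m t != 0.
Proof.
by case/exists_trF_neq0 => t tr_t; exists t; apply: contra tr_t => /eqP/trF3_eq0->.
Qed.

Lemma Tr_scalar (t : F) : Tr m (t, 0, 0) = (trF3 m t, 0, 0).
Proof. by rewrite /Tr trF3_0. Qed.

End Trace.

Lemma Tr_cmul_u (F : finFieldType) (m : nat) (a : RR F) :
  Tr m (cmul a (0, 1, 0)) = cmul (Tr m a) (0, 1, 0).
Proof. by case: a => [[a0 a1] a2]; rewrite /cmul /Tr !(mulr0, mulr1, addr0, add0r). Qed.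

Section Code.
Variables (F : finFieldType) (L : {set RR F}).

Lemma dotRE (c y : word L) : dotR c y = \sum_x cmul (c x) (y x).
Proof.
rewrite [RHS]surjective_pairing [X in (X, _)]surjective_pairing.
by rewrite !raddf_sum.
Qed.

Lemma dualCP (m : nat) (y : word L) :
  reflect (forall a, dotR (cw m L a) y = 0) (y \in dualC m L).
Proof.
rewrite inE; apply: (iffP forallP) => [y_dual a | y_dual c].
  by have /implyP/(_ (imset_f _ _))/eqP := y_dual (cw m L a); apply.
by apply/implyP => /imsetP[a _ ->]; rewrite y_dual.
Qed.

Lemma count_gray_eq0 (r : R3) :
  (count (fun e : 'F_3 => e != 0) (gray r) == 0%N) = (r == 0).
Proof.
by case: r => [[a b] c]; rewrite /= !xpair_eqE; case: (a =P 0); case: (b =P 0); case: (c =P 0).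
Qed.

Lemma leeWt_lt2_supp (y : word L) (x0 x : Lidx L) :
  (leeWt y < 2)%N -> y x0 != 0 -> x != x0 -> y x = 0.
Proof.
move=> wt_y y_x0 x_neq; apply/eqP; rewrite -count_gray_eq0 -leqn0; move: wt_y.
rewrite /leeWt (bigD1 x0) //= (bigD1 x) //= -count_gray_eq0 -lt0n in y_x0 *.
lia.
Qed.

End Code.

Lemma dualC_leeWt_ge2 (F : finFieldType) (m : nat) (L : {set RR F}) (y : word L) :
  (0 < m)%N -> #|F| = (3 ^ m)%N -> {in L, forall x, aug x != 0} ->
  y \in dualC m L -> y != zeroword L -> (2 <= leeWt y)%N.
Proof.
move=> m_gt0 cardF L_aug /dualCP y_dual y_neq0.
have [x0 y_x0] : exists x0, y x0 != 0.
  apply/existsP; apply: contraNT y_neq0 => /existsPn y0.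
  by apply/eqP/ffunP => x; rewrite ffunE; apply/eqP/negPn/y0.
rewrite leqNgt; apply/negP => wt_y.
have [t tr_t] := exists_trF3_neq0 cardF m_gt0.
have [a a_x0] := exists_cmul_eq_scalar (pchar3 cardF) t (L_aug _ (valP x0)).
have := y_dual a; rewrite dotRE (sum_supported1 (i := x0)) => [|x x_neq]; last first.
  by rewrite (leeWt_lt2_supp wt_y y_x0 x_neq) cmulr0.
rewrite ffunE a_x0 (Tr_scalar cardF) => /(cmul_scalar_eq0 tr_t) y_x0_eq0.
by rewrite y_x0_eq0 eqxx in y_x0.
Qed.

Lemma dualC_leeWt2_witness (F : finFieldType) (m : nat) (L : {set RR F}) :
  (1, 0, 0) \in L -> (0, 1, 0) \in L ->
  exists2 y, y \in dualC m L & y != zeroword L /\ leeWt y = 2%N.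
Proof.
move=> one_L u_L.
pose i1 : Lidx L := exist [in L] _ one_L; pose iu : Lidx L := exist [in L] _ u_L.
have i1_neq_iu : i1 != iu.
  by apply/eqP => /(congr1 (fun x => (val x).1.1)) /eqP; rewrite oner_eq0.
pose y : word L :=
  [ffun x => if x == i1 then (0, 1, 0) else if x == iu then (-1, 0, 0) else 0].
have y_supp x : x != i1 -> x != iu -> y x = 0 by rewrite ffunE => /negbTE-> /negbTE->.
have [y_i1 y_iu] : y i1 = (0, 1, 0) /\ y iu = (-1, 0, 0).
  by rewrite !ffunE eqxx eq_sym (negbTE i1_neq_iu) eqxx.
exists y.
  apply/dualCP => a; rewrite dotRE (sum_supported2 i1_neq_iu) => [|x ? ?]; last first.
    by rewrite y_supp ?cmulr0.
  by rewrite y_i1 y_iu !ffunE /= cmulr1 Tr_cmul_u cmulrN1 subrr.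
split.
  by apply: contraTneq isT => /(congr1 (fun z : word L => (z i1).1.2)); rewrite y_i1 ffunE.
rewrite /leeWt (sum_supported2 (V := nat) i1_neq_iu) ?y_i1 ?y_iu // => x ? ?.
by rewrite y_supp.
Qed.

Section Units.
Variable F : finFieldType.

Lemma aug_ofU1 (x1 x2 x3 : F) : aug (ofU1 x1 x2 x3) = x1.
Proof. by rewrite /aug /ofU1 /cadd /cmul /=; ring. Qed.

Lemma aug_Runits : {in Runits F, forall x, aug x != 0}.
Proof. by move=> y /imsetP[x]; rewrite inE => x1_neq0 ->; rewrite aug_ofU1. Qed.

Lemma Lprime_sub_Runits : Lprime F \subset Runits F.
Proof.
apply/subsetP => y /imsetP[x]; rewrite !inE => /andP[x1_neq0 _] ->.
by apply: imset_f; rewrite inE.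
Qed.

Lemma ofU1_Lprime (x1 x2 x3 : F) : x1 \in Qsq F -> ofU1 x1 x2 x3 \in Lprime F.
Proof. by move=> x1_sq; apply: (imset_f _ (x := (x1, x2, x3))); rewrite inE. Qed.

Lemma one_Qsq : 1 \in Qsq F.
Proof. by rewrite inE oner_eq0; apply/existsP; exists 1; rewrite expr1n. Qed.

Lemma one_Lprime : (1, 0, 0) \in Lprime F.
Proof.
rewrite (_ : (1, 0, 0) = ofU1 1 0 0) ?ofU1_Lprime ?one_Qsq //.
by rewrite /ofU1 /cadd /cmul /=; congr (_, _, _); ring.
Qed.

Lemma u_Lprime : (0, 1, 0) \in Lprime F.
Proof.
rewrite (_ : (0, 1, 0) = ofU1 1 1 0) ?ofU1_Lprime ?one_Qsq //.
by rewrite /ofU1 /cadd /cmul /=; congr (_, _, _); ring.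
Qed.

End Units.

Theorem theorem7p2 (F : finFieldType) (m : nat) (L : {set RR F}) :
  (0 < m)%N -> #|F| = (3 ^ m)%N ->
  (L = Lprime F \/ L = Runits F) ->
  (exists2 y, y \in dualC m L & y != zeroword L /\ leeWt y = 2%N) /\
  (forall y, y \in dualC m L -> y != zeroword L -> (2 <= leeWt y)%N).
Proof.
move=> m_gt0 cardF L_def.
have Lprime_sub_L : Lprime F \subset L by case: L_def => ->; rewrite ?Lprime_sub_Runits.
have L_sub : L \subset Runits F by case: L_def => ->; rewrite ?Lprime_sub_Runits.
split.
  by apply: dualC_leeWt2_witness; apply: (subsetP Lprime_sub_L); rewrite ?one_Lprime ?u_Lprime.
move=> y; apply: dualC_leeWt_ge2 => // x /(subsetP L_sub); exact: aug_Runits.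
Qed.
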